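(* Run Algorithm 1 on an instance of Problem (P); suppose it performs $k$ iterations and the indices chosen as $i^*$ are $i_1,i_2,\dots,i_k$ in order, and let $x_1,\dots,x_n$ be the values of the variables after the last iteration. Then there exists an optimal solution $(x_1^*,\dots,x_n^* )$ of Problem (P) such that $x_{i_j}^*=x_{i_j}$ for all $j=1,\dots,k$.
   Context: Problem (P): given an integer $n\ge1$, reals $0<q_1\le\cdots\le q_n$, $z_1,\dots,z_n>0$ and $K>0$, maximize $\sum_{i=1}^n x_i$ subject to $0\le x_i\le q_i$ for all $i$, $0\le x_1\le x_2\le\cdots\le x_n$, and $\sum_{i=1}^n z_ix_i\le K$. For $1\le i<j\le n+1$ let $\mathrm{sum}(i,j)=z_i+\cdots+z_{j-1}$ and $\mathrm{avg}(i,j)=\mathrm{sum}(i,j)/(j-i)$. Algorithm 1: Initialize $S=\{0,n+1\}$, $y_i=\mathrm{avg}(i,n+1)$ and $x_i=0$ for $i=1,\dots,n$, and $\hat B=K$. While $\hat B>0$ and $S\ne\{0,1,\dots,n+1\}$, perform an iteration: let $i^*$ be the index $i\in\{1,\dots,n\}\setminus S$ minimizing $y_i$, ties broken in favour of the smallest index; let $i_L=\max\{j\in S:j<i^*\}$ and $i_R=\min\{j\in S:j>i^*\}$; set $d=\min\{\hat B/((i_R-i^* )y_{i^*}),\ q_{i^*}-x_{i^*}\}$; set $\hat B\leftarrow\hat B-d(i_R-i^* )y_{i^*}$; set $x_i\leftarrow x_i+d$ for all $i^*\le i<i_R$; set $y_i\leftarrow\mathrm{avg}(i,i^* )$ for all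 $i_L<i<i^*$; add $i^*$ to $S$. When the loop ends, output $x_1,\dots,x_n$. *)

From HB Require Import structures.
From mathcomp Require Import all_boot all_order all_algebra.
Set Implicit Arguments. Unset Strict Implicit. Unset Printing Implicit Defensive.
Import Order.TTheory GRing.Theory Num.Theory.
Local Open Scope ring_scope.

Section Alg.
Variable R : realFieldType.

(* Indices 1..n of the paper are natural numbers; vectors are nat -> R,
   only their values at 1..n matter. *)

Definition sumz (z : nat -> R) (i j : nat) : R := \sum_(i <= l < j) z l.
Definition avgz (z : nat -> R) (i j : nat) : R := sumz z i j / (j - i)%:R.

Definition feasible (n : nat) (q z : nat -> R) (K : R) (x : nat -> R) : Prop :=
  (forall i, (1 <= i <= n)%N -> 0 <= x i /\ x i <= q i) /\
  (forall i, (1 <= i < n)%N -> x i <= x i.+1) /\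
  \sum_(1 <= i < n.+1) z i * x i <= K.

Definition objective (n : nat) (x : nat -> R) : R := \sum_(1 <= i < n.+1) x i.

Definition optimal (n : nat) (q z : nat -> R) (K : R) (x : nat -> R) : Prop :=
  feasible n q z K x /\
  forall x', feasible n q z K x' -> objective n x' <= objective n x.

(* State of Algorithm 1: the set S (as a list), y, x, and \hat B. *)
Record state := State { stS : seq nat; sty : nat -> R; stx : nat -> R; stB : R }.

Definition init_state (n : nat) (z : nat -> R) (K : R) : state :=
  State [:: 0%N; n.+1] (fun i => avgz z i n.+1) (fun _ => 0) K.

Definition guard (n : nat) (st : state) : bool :=
  (0 < stB st) && has (fun i => i \notin stS st) (iota 1 n).

(* i* : the index in {1..n} \ S minimizing y, smallest index among ties *)
Definition istar (n : nat) (st : state) : nat :=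
  let S := stS st in let y := sty st in
  head 0%N [seq i <- iota 1 n | (i \notin S) &&
                 all (fun j => (j \in S) || (y i <= y j)) (iota 1 n)].

Definition iLeft (st : state) (i : nat) : nat :=
  \max_(j <- stS st | (j < i)%N) j.

(* i_R = min {j in S : j > i*} (the set S always contains n+1) *)
Definition iRight (n : nat) (st : state) (i : nat) : nat :=
  head n.+1 [seq j <- iota i.+1 (n.+1 - i) | j \in stS st].

Definition step (n : nat) (q z : nat -> R) (st : state) : state :=
  let i := istar n st in
  let iL := iLeft st i in
  let iR := iRight n st i in
  let yi := sty st i in
  let d := Num.min (stB st / ((iR - i)%:R * yi)) (q i - stx st i) in
  State (i :: stS st)
        (fun l => if (iL < l < i)%N then avgz z l i else sty st l)
        (fun l => if (i <= l < iR)%N then stx st l + d else stx st l)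
        (stB st - d * (iR - i)%:R * yi).

Inductive exec (n : nat) (q z : nat -> R) : state -> seq nat -> state -> Prop :=
  | exec_stop st : ~~ guard n st -> exec n q z st [::] st
  | exec_step st tr st' : guard n st ->
      exec n q z (step n q z st) tr st' ->
      exec n q z st (istar n st :: tr) st'.

End Alg.

From HB Require Import structures.
From mathcomp Require Import all_boot all_order all_algebra.
From mathcomp Require Import zify ring lra.
Import Order.TTheory GRing.Theory Num.Theory.
Set Implicit Arguments. Unset Strict Implicit. Unset Printing Implicit Defensive.
Local Open Scope ring_scope.

(* Lagrangian duality.  Let r be the y-value of the last chosen index and, for
   j in 1..n, let G_j be the sum of r - z_l over l from j up to (excluding) the
   next element of S.  Summation by parts gives, for every w with w_0 = 0,
     r * sum_j w_j - sum_j z_j w_j = sum_j G_j * (w_j - [j \notin S] w_{j-1}).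
   Along the run G_j >= 0 on S and G_j <= 0 off S (the chosen y-values increase
   and the chosen index minimises y), x is constant between consecutive elements
   of S, and x_j = q_j for j in S unless the budget is exhausted and G_j = 0.
   Hence x maximises every summand among feasible w: if the budget is exhausted,
   r * obj w <= r * obj x + (z.w - K) <= r * obj x; otherwise S contains every
   index and x = q. *)

Lemma head_filter_iota (P : pred nat) d m k : has P (iota m k) ->
  let h := head d [seq j <- iota m k | P j] in
  [/\ P h, (m <= h < m + k)%N & forall j, (m <= j < h)%N -> ~~ P j].
Proof.
elim: k m => [|k IH] m //= /orP[Pm | hasP].
  by rewrite Pm /=; split=> // [|j]; lia.
case Pm: (P m) => /=; first by split=> // [|j]; lia.
have [Ph hh hlt] := IH m.+1 hasP; split=> // [|j hj]; first lia.
by case: (eqVneq j m) => [->|ne]; [rewrite Pm | apply: hlt; lia].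
Qed.

Lemma bigmax_id_mem (s : seq nat) (P : pred nat) :
  (\max_(j <- s | P j) j)%N \in 0%N :: [seq j <- s | P j].
Proof.
rewrite -big_filter; elim: [seq j <- s | P j] => [|a t IH]; first by rewrite big_nil.
rewrite big_cons !inE in IH *.
by case: (leqP a (\max_(j <- t) j)%N) => _; rewrite ?eqxx ?orbT // orbCA IH orbT.
Qed.

Lemma has_argmin d (T : orderType d) (f : nat -> T) (P : pred nat) s : has P s ->
  exists2 i, (i \in s) && P i & forall j, j \in s -> P j -> (f i <= f j)%O.
Proof.
rewrite has_filter; case E: [seq j <- s | P j] => [|a t] // _.
suff [i it imin] : exists2 i, i \in a :: t & forall j, j \in a :: t -> (f i <= f j)%O.
  exists i; first by rewrite andbC -mem_filter E.
  by move=> j js Pj; apply: imin; rewrite -E mem_filter Pj.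
elim: t a {E} => [|b t IH] a.
  by exists a => [|j]; rewrite ?mem_head // inE => /eqP->.
pose c := if (f a <= f b)%O then a else b.
have [le_ca le_cb] : (f c <= f a)%O /\ (f c <= f b)%O.
  by rewrite /c; case: (leP (f a) (f b)) => h; split=> //; exact: ltW.
have [i it imin] := IH c; have le_ic := imin c (mem_head _ _).
exists i.
  move: it; rewrite !inE => /orP[/eqP->|it]; last by rewrite it !orbT.
  by rewrite /c; case: ifP; rewrite eqxx ?orbT.
move=> j; rewrite !inE => /or3P[/eqP->|/eqP->|jt]; first exact: le_trans le_ca.
  exact: le_trans le_cb.
by apply: imin; rewrite inE jt orbT.
Qed.

Lemma eq_run_start (T : Type) (f : nat -> T) a b :
  (forall l, (a < l < b)%N -> f l = f l.-1) -> forall l, (a <= l < b)%N -> f l = f a.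
Proof.
move=> hf; elim=> [|l IH]; first by rewrite leqn0 => /andP[/eqP->].
rewrite leq_eqVlt => /andP[/orP[/eqP<- // | hal] hlb].
by rewrite hf ?hal ?hlb //= IH // -ltnS hal ltnW.
Qed.

Lemma sum_nat_restrict (R : nmodType) (F : nat -> R) m p a b :
  (m <= a)%N -> (b <= p)%N ->
  \sum_(m <= l < p) (if (a <= l < b)%N then F l else 0) = \sum_(a <= l < b) F l.
Proof.
by move=> hma hbp; rewrite (big_nat_widenl _ _ _ _ _ hma) (big_nat_widen _ _ _ _ _ hbp) big_mkcond.
Qed.

Section Algorithm.
Variable R : realFieldType.
Variables (n : nat) (q z : nat -> R) (K : R).
Hypothesis hq0 : forall i, (1 <= i <= n)%N -> 0 < q i.
Hypothesis hqmono : forall i, (1 <= i < n)%N -> q i <= q i.+1.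
Hypothesis hz : forall i, (1 <= i <= n)%N -> 0 < z i.

Lemma q_homo a b : (1 <= a)%N -> (a <= b <= n)%N -> q a <= q b.
Proof.
move=> ha; elim: b => [|b IH] /andP[]; first lia.
rewrite leq_eqVlt => /orP[/eqP<- // | hab] hbn.
by apply: le_trans (IH _) (hqmono _); lia.
Qed.

Definition gain (r : R) (a b : nat) : R := \sum_(a <= l < b) (r - z l).

Lemma gainE r a b : gain r a b = r *+ (b - a) - sumz z a b.
Proof. by rewrite /gain sumrB sumr_const_nat. Qed.

Lemma gain_le0 r a b : (a < b)%N -> (gain r a b <= 0) = (r <= avgz z a b).
Proof.
move=> hab; have hba : 0 < (b - a)%:R :> R by rewrite ltr0n subn_gt0.
by rewrite gainE subr_le0 /avgz ler_pdivlMr // mulr_natr.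
Qed.

Lemma gain_avgz a b : (a < b)%N -> gain (avgz z a b) a b = 0.
Proof.
move=> hab; have hba : (b - a)%:R != 0 :> R by rewrite pnatr_eq0 -lt0n subn_gt0.
by rewrite gainE -[avgz z a b *+ _]mulr_natr divfK // subrr.
Qed.

Lemma gain_split r a b c : (a <= b <= c)%N -> gain r a c = gain r a b + gain r b c.
Proof. by case/andP=> hab hbc; rewrite /gain (big_cat_nat hab hbc). Qed.

Lemma gain_recl r a b : (a < b)%N -> gain r a b = r - z a + gain r a.+1 b.
Proof. by move=> hab; rewrite /gain big_ltn. Qed.

Lemma ler_gain r r' a b : r <= r' -> gain r a b <= gain r' a b.
Proof. by move=> hr; apply: ler_sum => l _; rewrite lerD2r. Qed.

Lemma avgz_gt0 a b : (1 <= a)%N -> (a < b <= n.+1)%N -> 0 < avgz z a b.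
Proof.
move=> ha /andP[hab hbn]; rewrite /avgz divr_gt0 ?ltr0n ?subn_gt0 //.
rewrite /sumz big_ltn // ltr_pwDl //; first by rewrite hz // ha; lia.
by rewrite big_nat sumr_ge0 // => l hl; rewrite ltW ?hz //; lia.
Qed.

Lemma iRightP (st : state R) j : n.+1 \in stS st -> (j <= n)%N ->
  [/\ iRight n st j \in stS st, (j < iRight n st j <= n.+1)%N &
      forall k, (j < k < iRight n st j)%N -> k \notin stS st].
Proof.
move=> hSn hj; have hasS : has (fun k => k \in stS st) (iota j.+1 (n.+1 - j)).
  by apply/hasP; exists n.+1; rewrite // mem_iota; lia.
have [hS hrange hbelow] := head_filter_iota n.+1 hasS.
by rewrite /iRight; set h := head _ _ in hS hrange hbelow *; split=> //; lia.
Qed.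

Lemma iRight_eq (st : state R) j m : n.+1 \in stS st -> (j <= n)%N ->
  m \in stS st -> (j < m)%N -> (forall k, (j < k < m)%N -> k \notin stS st) ->
  iRight n st j = m.
Proof.
move=> hSn hj hm hjm hgap; have [hN /andP[hjN _] hgapN] := iRightP hSn hj.
case: (ltngtP m (iRight n st j)) => // hlt; first by move: (hgapN m); rewrite hjm hlt hm => /(_ isT).
by move: (hgap (iRight n st j)); rewrite hjN hlt hN => /(_ isT).
Qed.

Lemma iLeftP (st : state R) i : 0%N \in stS st -> (0 < i)%N ->
  [/\ iLeft st i \in stS st, (iLeft st i < i)%N &
      forall k, k \in stS st -> (k < i)%N -> (k <= iLeft st i)%N].
Proof.
move=> hS0 hi; have := bigmax_id_mem (stS st) (fun j => (j < i)%N).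
rewrite -/(iLeft st i) inE mem_filter => hmem.
split; last by move=> k hk hki; apply: leq_bigmax_seq.
all: by case/orP: hmem => [/eqP-> | /andP[]].
Qed.

Lemma istarP (st : state R) : guard n st ->
  [/\ (1 <= istar n st <= n)%N, istar n st \notin stS st &
      forall j, (1 <= j <= n)%N -> j \notin stS st -> sty st (istar n st) <= sty st j].
Proof.
case/andP=> _ hfree.
have [m /andP[hm hmS] hmin] := has_argmin (sty st) hfree.
set P := fun i => (i \notin stS st) &&
  all (fun j => (j \in stS st) || (sty st i <= sty st j)) (iota 1 n).
have hasP : has P (iota 1 n).
  apply/hasP; exists m; rewrite // /P hmS; apply/allP=> j hj.
  by case: (boolP (j \in stS st)) => //= hjS; apply: hmin.
have [/andP[hS /allP hall] hrange _] := head_filter_iota 0 hasP.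
split=> // j hj hjS.
by have /[!(negbTE hjS)] := hall j; rewrite mem_iota; apply; lia.
Qed.

Definition block_gain (r : R) (st : state R) (j : nat) : R := gain r j (iRight n st j).

(* [r] is the multiplier of the header: 0 before the first iteration. *)
Record invariant (r : R) (st : state R) : Prop := Invariant {
  inv_S0 : 0%N \in stS st;
  inv_Sn : n.+1 \in stS st;
  inv_y : forall j, (1 <= j <= n)%N -> j \notin stS st ->
    sty st j = avgz z j (iRight n st j);
  inv_gain_in : forall j, (1 <= j <= n)%N -> j \in stS st -> 0 <= block_gain r st j;
  inv_gain_out : forall j, (1 <= j <= n)%N -> j \notin stS st -> block_gain r st j <= 0;
  inv_x0 : stx st 0 = 0;
  inv_x_flat : forall j, (1 <= j <= n)%N -> j \notin stS st -> stx st j = stx st j.-1;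
  inv_x_bound : forall j, (1 <= j <= n)%N -> 0 <= stx st j /\ stx st j <= q j;
  inv_x_mono : forall j, (1 <= j < n)%N -> stx st j <= stx st j.+1;
  inv_x_full : forall j, (1 <= j <= n)%N -> j \in stS st ->
    stx st j = q j \/ (stB st = 0 /\ block_gain r st j = 0);
  inv_B : 0 <= stB st;
  inv_budget : \sum_(1 <= l < n.+1) z l * stx st l = K - stB st }.

Lemma invariant_init : 0 < K -> invariant 0 (init_state n z K).
Proof.
move=> hK.
have hN j : (1 <= j <= n)%N -> iRight n (init_state n z K) j = n.+1.
  move=> hj; apply: iRight_eq; rewrite /= ?inE ?eqxx ?orbT //; try lia.
  by move=> k hk; rewrite !inE; lia.
split=> //=; rewrite ?inE ?eqxx ?orbT //.
- by move=> j hj _; rewrite hN.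
- by move=> j hj; rewrite !inE; lia.
- move=> j hj _; rewrite /block_gain hN // /gain big_nat sumr_le0 // => l hl.
  by rewrite sub0r oppr_le0 ltW // hz //; lia.
- by move=> j hj; rewrite lexx ltW ?hq0.
- by move=> j hj; rewrite !inE; lia.
- exact: ltW.
- by rewrite big1 ?subrr // => l _; rewrite mulr0.
Qed.

Section Step.
Variables (r : R) (st : state R).
Hypotheses (inv : invariant r st) (hg : guard n st).

Local Notation i := (istar n st).
Local Notation iR := (iRight n st (istar n st)).
Local Notation iL := (iLeft st (istar n st)).
Local Notation yi := (sty st (istar n st)).
Local Notation st' := (step n q z st).
Local Notation raise := (Num.min (stB st / ((iR - i)%:R * yi)) (q i - stx st i)).

Lemma istar_range : (1 <= i <= n)%N.
Proof. by case: (istarP hg). Qed.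

Lemma istar_notin : i \notin stS st.
Proof. by case: (istarP hg). Qed.

Lemma istar_min j : (1 <= j <= n)%N -> j \notin stS st -> yi <= sty st j.
Proof. by case: (istarP hg) => _ _; apply. Qed.

Lemma iRight_istarP : [/\ iR \in stS st, (i < iR <= n.+1)%N &
  forall k, (i < k < iR)%N -> k \notin stS st].
Proof. by apply: iRightP (inv_Sn inv) _; case/andP: istar_range. Qed.

Lemma iRight_step j : (j <= n)%N ->
  iRight n st' j = if (j < i < iRight n st j)%N then i else iRight n st j.
Proof.
move=> hj; have [hN hjN hgap] := iRightP (inv_Sn inv) hj.
have hSn' : n.+1 \in stS st' by rewrite inE (inv_Sn inv) orbT.
case: ifP => hsplit; apply: iRight_eq; rewrite ?inE ?hN ?orbT ?eqxx //; try lia.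
all: by move=> k hk; rewrite inE negb_or hgap ?andbT; lia.
Qed.

Lemma iRight_split j : (j <= n)%N -> (j < i < iRight n st j)%N -> iRight n st j = iR.
Proof.
move=> hj hsplit; have [hN _ hgap] := iRightP (inv_Sn inv) hj.
symmetry; apply: iRight_eq; rewrite ?(inv_Sn inv) //; try lia.
  by case/andP: istar_range.
by move=> k hk; apply: hgap; lia.
Qed.

Lemma iLeft_step j : (j <= n)%N -> j \notin stS st ->
  (iL < j < i)%N = (j < i < iRight n st j)%N.
Proof.
move=> hj hjS; have [hN hjN hgap] := iRightP (inv_Sn inv) hj.
have i_gt0 : (0 < i)%N by case/andP: istar_range.
have [hL hLi hLmax] := iLeftP (inv_S0 inv) i_gt0.
have hNi : iRight n st j != i by apply: contraNneq istar_notin => <-.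
apply/idP/idP => /andP[h1 h2].
  rewrite h2 ltnNge; apply/negP => hNle.
  have := hLmax _ hN; lia.
rewrite h1 andbT; case: (ltngtP iL j) => // h; last by move: hjS; rewrite -h hL.
have : iL \notin stS st by apply: hgap; lia.
by rewrite hL.
Qed.

Lemma gain_istar : gain yi i iR = 0.
Proof.
have [_ /andP[hiR _] _] := iRight_istarP.
by rewrite (inv_y inv istar_range istar_notin) gain_avgz.
Qed.

Lemma r_le_y_istar : r <= yi.
Proof.
have [_ /andP[hiR _] _] := iRight_istarP.
have := inv_gain_out inv istar_range istar_notin.
by rewrite /block_gain gain_le0 // -(inv_y inv istar_range istar_notin).
Qed.

Lemma y_istar_gt0 : 0 < yi.
Proof.
have [_ hiR _] := iRight_istarP.
by rewrite (inv_y inv istar_range istar_notin) avgz_gt0 //; case/andP: istar_range.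
Qed.

(* At price [yi] the block [i, iR) has zero gain, so splitting the block
   containing [i] at [i] changes no block gain. *)
Lemma block_gain_step j : (j <= n)%N -> block_gain yi st' j = block_gain yi st j.
Proof.
move=> hj; rewrite /block_gain iRight_step //; case: ifP => // hsplit.
have [_ hiR _] := iRight_istarP.
rewrite (iRight_split hj hsplit) (@gain_split _ j i iR) ?gain_istar ?addr0 //; lia.
Qed.

Lemma inv_gain_in_step j : (1 <= j <= n)%N -> j \in stS st' -> 0 <= block_gain yi st' j.
Proof.
move=> hj; rewrite block_gain_step; last by case/andP: hj.
rewrite inE => /orP[/eqP-> | hjS]; first by rewrite /block_gain gain_istar.
exact: le_trans (inv_gain_in inv hj hjS) (ler_gain _ _ r_le_y_istar).
Qed.

Lemma inv_gain_out_step j : (1 <= j <= n)%N -> j \notin stS st' -> block_gain yi st' j <= 0.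
Proof.
move=> hj; rewrite inE negb_or => /andP[_ hjS].
have hjn : (j <= n)%N by case/andP: hj.
have [_ /andP[hjN _] _] := iRightP (inv_Sn inv) hjn.
rewrite block_gain_step //.
by rewrite /block_gain gain_le0 // -(inv_y inv hj hjS) istar_min.
Qed.

Lemma inv_y_step j : (1 <= j <= n)%N -> j \notin stS st' ->
  sty st' j = avgz z j (iRight n st' j).
Proof.
move=> hj; rewrite inE negb_or => /andP[_ hjS] /=.
have hjn : (j <= n)%N by case/andP: hj.
rewrite iRight_step // -iLeft_step //.
by case: (iL < j < i)%N => //; rewrite (inv_y inv hj hjS).
Qed.

Lemma y_istar_block : (iR - i)%:R * yi = sumz z i iR.
Proof.
have [_ /andP[hiR _] _] := iRight_istarP.
rewrite (inv_y inv istar_range istar_notin) /avgz mulrC divfK //.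
by rewrite pnatr_eq0 -lt0n subn_gt0.
Qed.

Lemma sumz_block_gt0 : 0 < sumz z i iR.
Proof.
have [_ /andP[hiR _] _] := iRight_istarP.
by rewrite -y_istar_block mulr_gt0 ?y_istar_gt0 // ltr0n subn_gt0.
Qed.

Lemma stx_step l : stx st' l = if (i <= l < iR)%N then stx st l + raise else stx st l.
Proof. by []. Qed.

Lemma stB_step : stB st' = stB st - raise * sumz z i iR.
Proof. by rewrite /= -y_istar_block mulrA. Qed.

Lemma raise_ge0 : 0 <= raise.
Proof.
rewrite y_istar_block le_min divr_ge0 ?(inv_B inv) ?(ltW sumz_block_gt0) //= subr_ge0.
exact: (inv_x_bound inv istar_range).2.
Qed.

Lemma raise_le_cap : stx st i + raise <= q i.
Proof. by rewrite addrC -lerBrDr ge_min lexx orbT. Qed.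

Lemma stB_step_ge0 : 0 <= stB st'.
Proof.
rewrite stB_step subr_ge0 -ler_pdivlMr ?sumz_block_gt0 //.
by rewrite y_istar_block ge_min lexx.
Qed.

Lemma raise_cases : stB st' = 0 \/ stx st i + raise = q i.
Proof.
rewrite stB_step y_istar_block; case: (leP (stB st / sumz z i iR) (q i - stx st i)) => _.
  by left; rewrite divfK ?subrr // gt_eqF ?sumz_block_gt0.
by right; rewrite addrC subrK.
Qed.

Lemma x_flat_block l : (i <= l < iR)%N -> stx st l = stx st i.
Proof.
move=> hl; have [_ hiR hgap] := iRight_istarP; have hi := istar_range.
by apply: (eq_run_start _ hl) => k hk; apply: (inv_x_flat inv); [lia | apply: hgap].
Qed.

Lemma stx_at_cap j : (1 <= j <= n)%N -> j \in stS st -> stx st j = q j.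
Proof.
move=> hj hjS; case: (inv_x_full inv hj hjS) => // -[hB _].
by move: hg; rewrite /guard hB ltxx.
Qed.

Lemma inv_x_flat_step j : (1 <= j <= n)%N -> j \notin stS st' -> stx st' j = stx st' j.-1.
Proof.
move=> hj; rewrite inE negb_or => /andP[hji hjS].
have [hR _ _] := iRight_istarP; have hjR : j != iR by apply: contraNneq hjS => ->.
rewrite !stx_step (inv_x_flat inv hj hjS).
by have -> : (i <= j.-1 < iR)%N = (i <= j < iR)%N by lia.
Qed.

Lemma inv_x_bound_step j : (1 <= j <= n)%N -> 0 <= stx st' j /\ stx st' j <= q j.
Proof.
move=> hj; rewrite stx_step; case: ifP => [hblk | _]; last exact: (inv_x_bound inv hj).
have [hxi0 _] := inv_x_bound inv istar_range.
rewrite x_flat_block // addr_ge0 ?raise_ge0 //; split=> //.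
apply: le_trans raise_le_cap (q_homo _ _); case/andP: istar_range => // *; lia.
Qed.

Lemma inv_x_mono_step j : (1 <= j < n)%N -> stx st' j <= stx st' j.+1.
Proof.
move=> hj; have hm := inv_x_mono inv hj; have [hR hiR _] := iRight_istarP.
rewrite !stx_step; case: ifP => hj1; case: ifP => hj2; first by rewrite lerD2r.
- have ejR : j.+1 = iR by lia.
  rewrite x_flat_block // ejR [stx st iR]stx_at_cap //; last lia.
  apply: le_trans raise_le_cap (q_homo _ _); case/andP: istar_range => // *; lia.
- by rewrite (le_trans hm) // lerDl raise_ge0.
- exact: hm.
Qed.

Lemma inv_x_full_step j : (1 <= j <= n)%N -> j \in stS st' ->
  stx st' j = q j \/ (stB st' = 0 /\ block_gain yi st' j = 0).
Proof.
move=> hj; have [hR /andP[hiR _] hgap] := iRight_istarP.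
rewrite inE stx_step => /orP[/eqP-> | hjS].
  rewrite leqnn hiR block_gain_step; last by case/andP: istar_range.
  by rewrite /block_gain gain_istar; case: raise_cases; [right | left].
left; rewrite ifF ?stx_at_cap //; apply/negbTE/negP => hblk.
have [eji | nji] := eqVneq j i; first by move: istar_notin; rewrite -eji hjS.
have : j \notin stS st by apply: hgap; lia.
by rewrite hjS.
Qed.

Lemma inv_budget_step : \sum_(1 <= l < n.+1) z l * stx st' l = K - stB st'.
Proof.
have [_ /andP[hiR hRn] _] := iRight_istarP.
have -> : \sum_(1 <= l < n.+1) z l * stx st' l = \sum_(1 <= l < n.+1) z l * stx st l +
    \sum_(1 <= l < n.+1) (if (i <= l < iR)%N then z l * raise else 0).
  by rewrite -big_split; apply: eq_bigr => l _ /=; case: ifP => _; rewrite ?mulrDr ?addr0.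
rewrite sum_nat_restrict //; last by case/andP: istar_range.
by rewrite (inv_budget inv) stB_step -mulr_suml /sumz; ring.
Qed.

Lemma invariant_step : invariant yi st'.
Proof.
have i_gt0 : (0 < i)%N by case/andP: istar_range.
split.
- by rewrite inE (inv_S0 inv) orbT.
- by rewrite inE (inv_Sn inv) orbT.
- exact: inv_y_step.
- exact: inv_gain_in_step.
- exact: inv_gain_out_step.
- by rewrite stx_step ifF ?(inv_x0 inv) //; apply/negbTE; lia.
- exact: inv_x_flat_step.
- exact: inv_x_bound_step.
- exact: inv_x_mono_step.
- exact: inv_x_full_step.
- exact: stB_step_ge0.
- exact: inv_budget_step.
Qed.

End Step.

Lemma exec_stop st tr fin : exec n q z st tr fin -> ~~ guard n fin.
Proof. by elim. Qed.

Lemma exec_invariant st tr fin r : exec n q z st tr fin -> invariant r st ->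
  exists r', [/\ invariant r' fin, r <= r' & (guard n st -> 0 < r')].
Proof.
move=> hex; elim: hex r => [st0 hstop | st0 tr0 st1 hg _ IH] r inv.
  by exists r; split=> // hg; rewrite hg in hstop.
have [r' [inv' hle hpos]] := IH _ (invariant_step inv hg).
exists r'; split=> //; first exact: le_trans (r_le_y_istar inv hg) hle.
by move=> _; exact: lt_le_trans (y_istar_gt0 inv hg) hle.
Qed.

Lemma block_gain_recl r st j : n.+1 \in stS st -> (1 <= j <= n)%N ->
  block_gain r st j = r - z j + (if j.+1 \in stS st then 0 else block_gain r st j.+1).
Proof.
move=> hSn hj; have hjn : (j <= n)%N by case/andP: hj.
have [hN /andP[hjN _] hgap] := iRightP hSn hjn.
rewrite /block_gain gain_recl //; case: ifP => hS1.
  have -> : iRight n st j = j.+1 by apply: iRight_eq => // k; lia.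
  by rewrite /gain big_geq ?addr0.
have hj1 : (j.+1 <= n)%N.
  by rewrite ltn_neqAle hjn andbT; apply: contraFneq hS1 => ->.
have hNj1 : iRight n st j != j.+1 by apply: contraFneq hS1 => <-.
congr (_ + gain _ _ _); symmetry; apply: iRight_eq => //; first lia.
by move=> k hk; apply: hgap; lia.
Qed.

Lemma sum_by_blocks r st (w : nat -> R) : n.+1 \in stS st -> w 0 = 0 ->
  \sum_(1 <= j < n.+1) (r - z j) * w j =
  \sum_(1 <= j < n.+1) block_gain r st j * (w j - (if j \in stS st then 0 else w j.-1)).
Proof.
move=> hSn hw0.
pose next_gain j := if j.+1 \in stS st then 0 else block_gain r st j.+1.
have shift : \sum_(1 <= j < n.+1) (if j \in stS st then 0 else block_gain r st j) * w j.-1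
    = \sum_(1 <= j < n.+1) next_gain j * w j.
  rewrite big_add1 /=; have -> : \sum_(0 <= j < n) next_gain j * w j =
      \sum_(0 <= j < n.+1) next_gain j * w j by rewrite big_nat_recr //= /next_gain hSn mul0r addr0.
  by rewrite [LHS]big_ltn //= hw0 mulr0 add0r.
have -> : \sum_(1 <= j < n.+1) block_gain r st j * (w j - (if j \in stS st then 0 else w j.-1))
    = \sum_(1 <= j < n.+1) block_gain r st j * w j -
      \sum_(1 <= j < n.+1) (if j \in stS st then 0 else block_gain r st j) * w j.-1.
  by rewrite -sumrB; apply: eq_bigr => j _; case: ifP => _; rewrite ?mul0r ?subr0 ?mulrBr.
rewrite shift -sumrB; apply: eq_big_nat => j hj.
by rewrite -mulrBl (block_gain_recl r hSn) -/(next_gain j) ?addrK //; lia.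
Qed.

Lemma lagrangian_le r st (w : nat -> R) : invariant r st ->
  (forall j, (1 <= j <= n)%N -> 0 <= w j /\ w j <= q j) ->
  (forall j, (1 <= j < n)%N -> w j <= w j.+1) ->
  \sum_(1 <= j < n.+1) (r - z j) * w j <= \sum_(1 <= j < n.+1) (r - z j) * stx st j.
Proof.
(* Feasibility does not constrain [w 0]. *)
move=> inv hw hmono; pose w0 j := if j is 0 then 0 else w j.
have -> : \sum_(1 <= j < n.+1) (r - z j) * w j = \sum_(1 <= j < n.+1) (r - z j) * w0 j.
  by apply: eq_big_nat => -[].
rewrite !(sum_by_blocks r (inv_Sn inv)) ?(inv_x0 inv) //; apply: ler_sum_nat => -[//|j] hj.
have hj' : (1 <= j.+1 <= n)%N by lia.
case: ifPn => hjS.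
  rewrite !subr0; case: (inv_x_full inv hj' hjS) => [-> | [_ ->]]; last by rewrite !mul0r.
  by rewrite ler_wpM2l ?(inv_gain_in inv hj' hjS) ?(hw _ hj').2.
rewrite -(inv_x_flat inv hj' hjS) subrr mulr0 mulr_le0_ge0 ?(inv_gain_out inv hj' hjS) //.
rewrite subr_ge0; case: j hj hj' {hjS} => [|j] hj hj'; first exact: (hw _ hj').1.
by apply: hmono; lia.
Qed.

Lemma invariant_optimal r fin : invariant r fin -> ~~ guard n fin -> 0 < r ->
  optimal n q z K (stx fin).
Proof.
move=> inv hstop hr; split.
  split; first exact: (inv_x_bound inv).
  split; first exact: (inv_x_mono inv).
  by rewrite (inv_budget inv) gerBl ?(inv_B inv).
move=> w [hw [hmono hKw]]; rewrite /objective.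
have [hB | hB] := eqVneq (stB fin) 0.
  have := lagrangian_le inv hw hmono.
  rewrite !(eq_bigr _ (fun j _ => mulrBl _ _ _)) !sumrB -!mulr_sumr (inv_budget inv) hB subr0.
  by move=> key; rewrite -(ler_pM2l hr); lra.
have hB0 : 0 < stB fin by rewrite lt_def hB (inv_B inv).
move: hstop; rewrite /guard hB0 /= => /hasPn hfull.
apply: ler_sum_nat => j hj; have hj' : (1 <= j <= n)%N by lia.
have hjS : j \in stS fin by apply/negPn/hfull; rewrite mem_iota; lia.
case: (inv_x_full inv hj' hjS) => [-> | [hB' _]]; first exact: (hw j hj').2.
by rewrite hB' eqxx in hB.
Qed.

End Algorithm.

Theorem lemma5 (R : realFieldType) (n : nat) (q z : nat -> R) (K : R)
  (hn : (1 <= n)%N)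
  (hq0 : forall i, (1 <= i <= n)%N -> 0 < q i)
  (hqmono : forall i, (1 <= i < n)%N -> q i <= q i.+1)
  (hz : forall i, (1 <= i <= n)%N -> 0 < z i)
  (hK : 0 < K)
  (tr : seq nat) (fin : state R) :
  exec n q z (init_state n z K) tr fin ->
  exists xs : nat -> R, optimal n q z K xs /\
    forall j, j \in tr -> xs j = stx fin j.
Proof.
move=> hex; exists (stx fin); split=> //.
have hg0 : guard n (init_state n z K).
  by rewrite /guard /= hK; apply/hasP; exists 1%N; rewrite ?mem_iota ?inE; lia.
have [r [inv _ hpos]] := exec_invariant hqmono hz hex (invariant_init hq0 hz hK).
exact: invariant_optimal inv (exec_stop hex) (hpos hg0).
Qed.
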